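(* Let $N\in\mathbb N$, $\sigma>0$, $\theta,\gamma\ge0$, let $H^N$ be a stochastic process with the dynamics described in the context and for $x>0$ let $S^N_x=\inf\{s:\Lambda^N_s(0)\ge\lfloor Nx\rfloor/N\}$. Then $S^N_x\to\infty$ almost surely as $x\to\infty$.
   Context: $H^N=(H^N_s)_{s\ge0}$ is continuous, piecewise linear with slopes $\pm2N$, starts at $0$ with slope $2N$; while moving upwards its slope jumps from $2N$ to $-2N$ at rate $N^2\sigma^2+4\gamma N\Lambda^N_s(H^N_s)$; while moving downwards its slope jumps from $-2N$ to $2N$ at rate $N^2\sigma^2+2N\theta$; whenever it reaches $0$ it is reflected above $0$. $\Lambda^N_s(t)$ is $\frac1{2N}$ times the number of $t$-crossings of $H^N$ between times $0$ and $s$, a local minimum at level $t$ counting as two crossings and a local maximum as none. *)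

From HB Require Import structures.
From mathcomp Require Import all_boot all_order all_algebra.
From mathcomp Require Import all_classical all_reals all_analysis.
Set Implicit Arguments. Unset Strict Implicit. Unset Printing Implicit Defensive.
Import Order.TTheory GRing.Theory Num.Theory.
Import numFieldNormedType.Exports.
Local Open Scope classical_set_scope.
Local Open Scope ring_scope.

(* A path of H^N is encoded by its sequence of slope-change times
   tau 0 = 0 < tau 1 < tau 2 < ...  On [tau k, tau k.+1] the slope is
   +2N if k is even and -2N if k is odd (H starts upwards; every slope
   change, including a reflection at 0, switches the direction). *)

Definition slope {R : realType} (N : nat) (k : nat) : R :=
  if odd k then - (2 * N%:R) else 2 * N%:R.

Fixpoint height {R : realType} (N : nat) (tau : nat -> R) (k : nat) : R :=
  match k with
  | 0 => 0
  | k'.+1 => height N tau k' + slope N k' * (tau k' .+1 - tau k')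
  end.

Definition seg {R : realType} (N : nat) (tau : nat -> R) (k : nat) (s : R) : R :=
  height N tau k + slope N k * (s - tau k).

(* Number of t-crossings, strictly before time s (and after time 0), made
   during the first n segments: a point r in the open interior of a
   segment with H r = t counts 1; a turning point at level t counts 2 if
   it is a local minimum (end of a downward segment, i.e. k odd) and 0 if
   it is a local maximum. *)
Definition crossings {R : realType} (N : nat) (tau : nat -> R) (n : nat)
    (s t : R) : nat :=
  \sum_(k < n)
    ((`[< exists r : R, (tau k < r < tau k.+1)%R /\ (r < s)%R /\ seg N tau k r = t >] : nat)
     + (if [&& odd k, (tau k.+1 < s)%R & height N tau k.+1 == t] then 2 else 0))%N.

Definition Lambda {R : realType} (N : nat) (tau : nat -> R) (s t : R) : \bar R :=
  ereal_sup (range (fun n : nat => ((crossings N tau n s t)%:R / (2 * N%:R))%:E)).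

Definition up_rate {R : realType} (N : nat) (sigma gamma : R) (tau : nat -> R)
    (k : nat) (s : R) : \bar R :=
  ((N%:R ^+ 2 * sigma ^+ 2)%:E + (4 * gamma * N%:R)%:E * Lambda N tau s (seg N tau k s))%E.

(* Pathwise construction of H^N from a sequence e of (i.i.d. Exp(1))
   clocks: the k-th segment uses clock e k.  An upward segment ends when
   the integrated switching rate reaches e k; a downward segment (constant
   switching rate N^2 sigma^2 + 2 N theta) ends either when its integrated
   rate reaches e k or when H reaches 0 (reflection), whichever is first. *)
Definition contour_dyn {R : realType} (N : nat) (sigma theta gamma : R)
    (e : nat -> R) (tau : nat -> R) : Prop :=
  [/\ tau 0 = 0,
      (forall k, tau k < tau k.+1),
      (forall k, ~~ odd k ->
         (\int[lebesgue_measure]_(s in `[tau k, tau k.+1])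
             up_rate N sigma gamma tau k s = (e k)%:E)%E) &
      (forall k, odd k ->
         tau k.+1 = tau k + Num.min (height N tau k / (2 * N%:R))
                                    (e k / (N%:R ^+ 2 * sigma ^+ 2 + 2 * N%:R * theta)))].

(* S^N_x = inf { s >= 0 : Lambda_s(0) >= floor(N x) / N }  (inf set0 = +oo) *)
Definition S_time {R : realType} (N : nat) (tau : nat -> R) (x : R) : \bar R :=
  ereal_inf [set s%:E | s in [set s : R | 0 <= s /\
     (((Num.floor (N%:R * x))%:~R / N%:R)%:E <= Lambda N tau s 0)%E]].

Definition indep_seq {R : realType} d (T : measurableType d)
    (P : probability T R) (X : nat -> T -> R) : Prop :=
  forall (n : nat) (B : nat -> set R), (forall i, measurable (B i)) ->
    P (\bigcap_(i in `I_n) (X i @^-1` B i)) = (\prod_(i < n) P (X i @^-1` B i))%E.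

From HB Require Import structures.
From mathcomp Require Import all_boot all_order all_algebra.
From mathcomp Require Import all_classical all_reals all_analysis.
From mathcomp Require Import ring lra zify.
Import Order.TTheory GRing.Theory Num.Theory.
Import numFieldNormedType.Exports.
Local Open Scope classical_set_scope.
Local Open Scope ring_scope.
Set Implicit Arguments. Unset Strict Implicit. Unset Printing Implicit Defensive.

(* The clock of an upward segment k is integrated against a switching rate
   N^2 sigma^2 + 4 gamma N Lambda, and before tau (k+1) every segment has
   produced at most 3 crossings, so Lambda <= 3 (k+1) / (2N) there.  Hence a
   segment whose Exp(1) clock exceeds 1/2 lasts at least 1 / (2 A (k+1)) with
   A = N^2 sigma^2 + 6 gamma, and it suffices to show tau k -> oo, since
   Lambda_s(0) stays bounded while s <= tau K.
   Cut the segments into levels, level i being 2^i blocks of 2i+2 upward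
   segments.  A block whose upward clocks are all <= 1/2 has probability at
   most 2^-(2i+2), so level i contains one with probability at most 2^-i; by
   Borel-Cantelli almost surely only finitely many levels do.  Every other
   level advances tau by at least 1 / (16 A (i+1)), and the harmonic series
   diverges. *)

Lemma telescope_ler_sum (R : numDomainType) (u c : nat -> R) n m :
  (n <= m)%N -> (forall k, (n <= k < m)%N -> c k <= u k.+1 - u k) ->
  \sum_(n <= k < m) c k <= u m - u n.
Proof. by move=> nm cu; rewrite -telescope_sumr //; exact: ler_sum_nat. Qed.

Lemma harmonic_tail_unbounded (R : realType) n (M : R) :
  exists2 m, (n <= m)%N & M < \sum_(n <= k < m) harmonic k.
Proof.
have nd : {homo series (@harmonic R) : i j / (i <= j)%N >-> i <= j}.
  apply/nondecreasing_seqP => k.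
  by rewrite /series /= big_nat_recr //= lerDl harmonic_ge0.
have [m Mm] : exists m, M + series harmonic n < series (@harmonic R) m.
  apply: contrapT => /forallNP Mub; apply: (@dvg_harmonic R).
  apply: nondecreasing_is_cvgn => //; exists (M + series harmonic n).
  by move=> _ [k _ <-]; rewrite leNgt; apply/negP/Mub.
exists (maxn m n); first exact: leq_maxr.
rewrite -sub_series_geq ?leq_maxr // ltrBrDr.
by apply: lt_le_trans Mm (nd _ _ (leq_maxl m n)).
Qed.

Lemma ge0_le_integral_pointwise d (T : measurableType d) (R : realType)
    (mu : {measure set T -> \bar R}) (D : set T) (f g : T -> \bar R) :
  (forall x, D x -> (0 <= f x)%E) -> (forall x, D x -> (f x <= g x)%E) ->
  (\int[mu]_(x in D) f x <= \int[mu]_(x in D) g x)%E.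
Proof.
move=> f0 fg; have g0 x : D x -> (0 <= g x)%E.
  by move=> Dx; exact: le_trans (f0 _ Dx) (fg _ Dx).
rewrite !ge0_integralE //; apply: ereal_sup_le => _ [h hf <-]; exists h => // x.
apply: le_trans (hf x) _; rewrite /patch; case: ifP => // /[!inE].
exact: fg.
Qed.

Lemma eprod_ge0_le1 (R : realType) (f : nat -> \bar R) n :
  (forall i, (0 <= f i <= 1)%E) -> (0 <= \prod_(i < n) f i <= 1)%E.
Proof.
move=> f01; elim: n => [|n /andP[p0 p1]]; first by rewrite big_ord0 lexx lee01.
have /andP[f0 f1] := f01 n.
by rewrite big_ord_recr /= mule_ge0 //= -[leRHS](mule1 1%E) lee_pmul.
Qed.

Lemma eprod_even_le_halfX (R : realType) (f : nat -> \bar R) lo L :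
  ~~ odd lo -> (forall i, (0 <= f i <= 1)%E) ->
  (forall i, ~~ odd i -> (lo <= i)%N -> (f i <= (2^-1)%:E)%E) ->
  (\prod_(i < lo + 2 * L) f i <= ((2^-1) ^+ L)%:E)%E.
Proof.
move=> lo_even f01 f_half; elim: L => [|L IH].
  by rewrite muln0 addn0 expr0; case/andP: (eprod_ge0_le1 lo f01).
rewrite (_ : (lo + 2 * L.+1 = (lo + 2 * L).+2)%N); last by lia.
rewrite !big_ord_recr /=.
have /andP[f0 _] := f01 (lo + 2 * L)%N.
have /andP[g0 g1] := f01 (lo + 2 * L).+1.
have /andP[p0 _] := eprod_ge0_le1 (lo + 2 * L) f01.
rewrite exprSr EFinM -[leRHS]mule1 lee_pmul // ?mule_ge0 // lee_pmul //.
by apply: f_half; rewrite ?leq_addr // oddD (negbTE lo_even) oddM.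
Qed.

Lemma nneseries_halfX_lty (R : realType) : (\sum_(n <oo) ((2^-1 : R) ^+ n)%:E < +oo)%E.
Proof.
apply: (@le_lt_trans _ _ 2%:E); last exact: ltey.
apply: lime_le.
  by apply: is_cvg_nneseries => n _ _; rewrite lee_fin exprn_ge0 // invr_ge0.
apply: nearW => n /=; rewrite sumEFin lee_fin.
have half_gt0 : (0 : R) < 2^-1 by rewrite invr_gt0.
have half_lt1 : `|(2^-1 : R)| < 1 by rewrite gtr0_norm // invf_lt1 // ltr1n.
have := geometric_le_lim n ler01 half_gt0 half_lt1.
rewrite /series /= (_ : (1 : R) / (1 - 2^-1) = 2); last by field.
by under eq_bigr do rewrite mul1r.
Qed.

Lemma preimage_measurable d d' (T : measurableType d) (U : measurableType d')
    (X : T -> U) (Y : set U) :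
  measurable_fun setT X -> measurable Y -> measurable (X @^-1` Y).
Proof. by move=> mX mY; rewrite -[X @^-1` Y]setTI; exact: mX. Qed.

Lemma Lambda_ge0 (R : realType) N (tau : nat -> R) s t : (0 <= Lambda N tau s t)%E.
Proof.
apply: (@le_trans _ _ ((crossings N tau 0 s t)%:R / (2 * N%:R))%:E).
  by rewrite lee_fin divr_ge0 // mulr_ge0.
by apply: ereal_sup_ubound; exists 0%N.
Qed.

Section turning_times.
Variables (R : realType) (N : nat) (tau : nat -> R).
Hypothesis tau_incr : forall k, tau k < tau k.+1.

Lemma tau_le : {homo tau : j k / (j <= k)%N >-> j <= k}.
Proof. exact: Order.NatMonotonyTheory.nondecnP (fun k => ltW (tau_incr k)). Qed.

Lemma crossings_le n K (s t : R) :
  s <= tau K -> (crossings N tau n s t <= 3 * K)%N.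
Proof.
move=> sK; apply: (@leq_trans (\sum_(j < n) 3 * (j < K))%N).
  apply: leq_sum => j _; case: ltnP => [_|Kj]; first by case: asboolP; case: ifP.
  have sj : s <= tau j by rewrite (le_trans sK) // tau_le.
  case: asboolP => [[r [/andP[jr _] [rs _]]]|_].
    by have := lt_trans (le_lt_trans sj jr) rs; rewrite ltxx.
  case: ifP => // /and3P[_ js _].
  by have := lt_trans (le_lt_trans sj (tau_incr j)) js; rewrite ltxx.
rewrite -big_distrr leq_mul2l /=; apply: leq_trans (geq_minr n K).
elim: n => [|n IH]; first by rewrite big_ord0.
by rewrite big_ord_recr /=; case: ltnP; lia.
Qed.

Lemma Lambda_le (s t : R) K : (0 < N)%N -> s <= tau K ->
  (Lambda N tau s t <= ((3 * K)%:R / (2 * N%:R))%:E)%E.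
Proof.
move=> N0 sK; apply: ge_ereal_sup => _ [n _ <-].
by rewrite lee_fin ler_wpM2r ?invr_ge0 ?mulr_ge0 // ler_nat crossings_le.
Qed.

Lemma S_time_cvgy : (0 < N)%N -> (forall M, exists K, M < tau K) ->
  S_time N tau x @[x --> +oo] --> +oo%E.
Proof.
move=> N_gt0 tau_unbounded; apply/cvgeyPge => M.
have [K MK] := tau_unbounded M.
near=> x.
have x_ge : (2 * K.+1)%:R <= x by near: x; apply: nbhs_pinfty_ge; rewrite num_real.
apply: le_ereal_inf_tmp => _ [s [_ Lambda_ge] <-]; rewrite lee_fin leNgt.
apply/negP => sM.
have := le_trans Lambda_ge (Lambda_le 0 N_gt0 (ltW (lt_trans sM MK))).
set F := (Num.floor (N%:R * x))%:~R.
have F_ge : (2 * K.+1)%:R <= F.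
  have -> : (2 * K.+1)%:R = ((2 * K.+1)%:Z)%:~R :> R by rewrite -[LHS]pmulrn.
  by rewrite /F ler_int floor_ge_int (le_trans x_ge) // ler_peMl // ler1n.
rewrite lee_fin invfM mulrA ler_pM2r ?invr_gt0 ?ltr0n // => /(le_trans F_ge).
have K_ge0 : (0 : R) <= K%:R by [].
rewrite !natrM -[K.+1%:R]natr1; lra.
Unshelve. all: by end_near.
Qed.

End turning_times.

Definition block_evens (i : nat) : nat := (2 * i + 2)%N.

Fixpoint level_start (i : nat) : nat :=
  if i is i'.+1 then (level_start i' + 2 ^ i' * (2 * block_evens i'))%N else 0%N.

Definition block_start (i j : nat) : nat := (level_start i + j * (2 * block_evens i))%N.

Lemma block_startS i j : block_start i j.+1 = (block_start i j + 2 * block_evens i)%N.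
Proof. by rewrite /block_start mulSn; lia. Qed.

Lemma block_start_even i j : ~~ odd (block_start i j).
Proof.
have even_mul a b : ~~ odd (a * (2 * b)) by rewrite mulnCA oddM.
rewrite /block_start oddD (negbTE (even_mul _ _)) addbF.
by elim: i => [|i IH] //=; rewrite oddD (negbTE IH) (negbTE (even_mul _ _)).
Qed.

Lemma level_start_le i : (level_start i <= 4 * i * 2 ^ i)%N.
Proof. by elim: i => [|i IH] //=; rewrite /block_evens expnS; move: IH; nia. Qed.

Lemma level_startS_gt0 i : (0 < level_start i.+1)%N.
Proof. by rewrite /= addn_gt0 muln_gt0 expn_gt0 /block_evens; lia. Qed.

Definition good_block (R : realType) (e : nat -> R) (i j : nat) : Prop :=
  exists k, [/\ (block_start i j <= k < block_start i j.+1)%N, ~~ odd k & 2^-1 < e k].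

Section contour.
Variables (R : realType) (N : nat) (sigma theta gamma : R) (e tau : nat -> R).
Hypotheses (N_gt0 : (0 < N)%N) (sigma_gt0 : 0 < sigma) (gamma_ge0 : 0 <= gamma).
Hypothesis dyn : contour_dyn N sigma theta gamma e tau.

(* Before [tau k.+1] at most [3 * k.+1] crossings occurred, so on segment [k]
   the switching rate [up_rate] is at most [rate * k.+1]. *)
Let rate : R := N%:R ^+ 2 * sigma ^+ 2 + 6 * gamma.

Let rate_gt0 : 0 < rate.
Proof.
have : 0 < N%:R ^+ 2 * sigma ^+ 2 :> R by rewrite mulr_gt0 // exprn_gt0 // ltr0n.
have : 0 <= 6 * gamma by rewrite mulr_ge0.
rewrite /rate; lra.
Qed.

Let tau_incr : forall k, tau k < tau k.+1. Proof. by case: dyn. Qed.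

Lemma up_clock_le k : ~~ odd k -> e k <= rate * k.+1%:R * (tau k.+1 - tau k).
Proof.
move=> ek; have [_ _ up_int _] := dyn.
pose c := N%:R ^+ 2 * sigma ^+ 2 + 4 * gamma * N%:R * ((3 * k.+1)%:R / (2 * N%:R)).
have : ((e k)%:E <= \int[lebesgue_measure]_(s in `[tau k, tau k.+1]) (cst c%:E) s)%E.
  rewrite -up_int //; apply: ge0_le_integral_pointwise => s Ds.
    rewrite /up_rate; apply: adde_ge0; first by rewrite lee_fin mulr_ge0 // sqr_ge0.
    by apply: mule_ge0; [rewrite lee_fin !mulr_ge0 | exact: Lambda_ge0].
  rewrite /up_rate /= /c EFinD leeD2l // [in leRHS]EFinM.
  apply: lee_wpmul2l; first by rewrite lee_fin !mulr_ge0.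
  by apply: Lambda_le => //; move: Ds; rewrite /= in_itv /= => /andP[].
rewrite integral_cst //= lebesgue_measure_itv /= lte_fin tau_incr.
rewrite -EFinD -EFinM lee_fin.
move=> /le_trans; apply; apply: ler_wpM2r; first by rewrite subr_ge0 ltW.
have -> : c = N%:R ^+ 2 * sigma ^+ 2 + 6 * gamma * k.+1%:R.
  by rewrite /c natrM; field; rewrite pnatr_eq0 -lt0n.
rewrite /rate (mulrDl (N%:R ^+ 2 * _)) lerD2r ler_peMr ?ler1n //.
by rewrite mulr_ge0 // sqr_ge0.
Qed.

Lemma block_growth l h k : (l <= k < h)%N -> ~~ odd k -> 2^-1 < e k ->
  (2 * rate * h%:R)^-1 <= tau h - tau l.
Proof.
move=> /andP[lk kh] ek ek_big.
have h_gt0 : (0 : R) < h%:R by rewrite ltr0n (leq_ltn_trans _ kh).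
have : 2^-1 <= rate * h%:R * (tau h - tau l).
  apply: le_trans (ltW ek_big) (le_trans (up_clock_le ek) _).
  apply: ler_pM; first by rewrite mulr_ge0 // ltW.
  - by rewrite subr_ge0 ltW.
  - by apply: ler_wpM2l; [exact: ltW | rewrite ler_nat].
  - by rewrite lerB // tau_le // ltnW.
move=> half_le; rewrite -div1r ler_pdivrMr ?mulr_gt0 //; lra.
Qed.

Lemma level_growth i : (forall j, (j < 2 ^ i)%N -> good_block e i j) ->
  harmonic i / (16 * rate) <= tau (level_start i.+1) - tau (level_start i).
Proof.
move=> good; set B := level_start i.+1.
have B_gt0 : (0 : R) < B%:R by rewrite ltr0n level_startS_gt0.
have block_le j : (j < 2 ^ i)%N ->
    (2 * rate * B%:R)^-1 <= tau (block_start i j.+1) - tau (block_start i j).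
  move=> jn; have [k [kb ek ek_big]] := good j jn.
  apply: le_trans (block_growth kb ek ek_big).
  have b_gt0 : (0 < block_start i j.+1)%N by case/andP: kb => _; apply: leq_ltn_trans.
  rewrite lef_pV2 ?posrE ?mulr_gt0 ?ltr0n ?level_startS_gt0 //.
  apply: ler_wpM2l; first by rewrite mulr_ge0 ?ltW.
  by rewrite ler_nat /block_start leq_add2l leq_mul2r jn orbT.
have := telescope_ler_sum (u := fun j => tau (block_start i j))
  (c := fun _ => (2 * rate * B%:R)^-1) (leq0n (2 ^ i))
  (fun j jn => block_le j (elimT andP jn).2).
rewrite sumr_const_nat subn0 (_ : block_start i (2 ^ i) = B) // /block_start mul0n addn0.
apply: le_trans.
have hB : B%:R <= 8 * i.+1%:R * (2 ^ i)%:R :> R.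
  by rewrite -!natrM ler_nat (leq_trans (level_start_le _)) // expnS; nia.
rewrite -[(2 * rate * B%:R)^-1 *+ _]mulr_natr [leRHS]mulrC ler_pdivlMr ?mulr_gt0 //.
have -> : harmonic i / (16 * rate) * (2 * rate * B%:R) = B%:R / (8 * i.+1%:R).
  by rewrite /harmonic /=; field; rewrite nat1r pnatr_eq0 (gt_eqF rate_gt0).
rewrite ler_pdivrMr ?mulr_gt0 ?ltr0n //; lra.
Qed.

Lemma tau_unbounded n0 :
    (forall i, (n0 <= i)%N -> forall j, (j < 2 ^ i)%N -> good_block e i j) ->
  forall M, exists K, M < tau K.
Proof.
move=> good M.
have [m n0m] := harmonic_tail_unbounded n0 ((M - tau (level_start n0)) * (16 * rate)).
rewrite -ltr_pdivlMr ?mulr_gt0 // => Mm; exists (level_start m).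
have := telescope_ler_sum (u := fun i => tau (level_start i))
  (c := fun i => harmonic i / (16 * rate)) n0m
  (fun i ni => level_growth (good i (elimT andP ni).1)).
rewrite -mulr_suml; lra.
Qed.

End contour.

(* Events are written as intersections over a prefix [`I_n], the form used by
   [indep_seq]; clocks outside the block are unconstrained. *)
Definition small_clock (R : realType) (lo k : nat) : set R :=
  if ~~ odd k && (lo <= k)%N then [set` `]-oo, 2^-1]%R] else setT.

Definition small_block d (T : measurableType d) (R : realType) (E : nat -> T -> R)
    (i j : nat) : set T :=
  \bigcap_(k in `I_(block_start i j + 2 * block_evens i))
     (E k @^-1` small_clock (block_start i j) k).

Definition bad_level d (T : measurableType d) (R : realType) (E : nat -> T -> R)
    (i : nat) : set T :=
  \big[setU/set0]_(j < 2 ^ i) small_block E i j.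

Lemma not_small_block d (T : measurableType d) (R : realType) (E : nat -> T -> R) i j w :
  ~ small_block E i j w -> good_block (E ^~ w) i j.
Proof.
move=> not_small; apply: contrapT => not_good; apply: not_small => k /= kb.
rewrite /small_clock; case: ifP => // /andP[k_even lo_k]; rewrite /= in_itv /= leNgt.
apply/negP => ek_big; apply: not_good; exists k; split => //.
by rewrite lo_k block_startS.
Qed.

Section bad_levels.
Context d (T : measurableType d) (R : realType) (P : probability T R) (E : nat -> T -> R).
Hypothesis mE : forall k, measurable_fun setT (E k).
Hypothesis E_exp : forall k (a : R), 0 <= a -> P [set w | a < E k w] = (expR (- a))%:E.
Hypothesis E_indep : indep_seq P E.

Lemma small_clock_measurable lo k : measurable (@small_clock R lo k).
Proof. by rewrite /small_clock; case: ifP => _ //; exact: measurable_itv. Qed.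

Lemma small_block_measurable i j : measurable (small_block E i j).
Proof.
apply: bigcap_measurableType => k _.
exact: preimage_measurable (small_clock_measurable _ _).
Qed.

Lemma bad_level_measurable i : measurable (bad_level E i).
Proof. by apply: bigsetU_measurable => j _; exact: small_block_measurable. Qed.

(* [P (E <= 1/2) = 1 - exp (-1/2) <= 1/2] by [1 + x <= exp x]. *)
Lemma prob_small_clock k : (P (E k @^-1` [set` `]-oo, 2^-1]%R]) <= (2^-1)%:E)%E.
Proof.
have -> : E k @^-1` [set` `]-oo, 2^-1]%R] = ~` [set w | 2^-1 < E k w].
  by apply/seteqP; split => w /=; rewrite in_itv /= leNgt => /negP.
rewrite probability_setC; last first.
  rewrite (_ : [set w | _] = E k @^-1` [set` `]2^-1, +oo[%R]); last first.
    by apply/seteqP; split => w /=; rewrite in_itv /= andbT.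
  exact: preimage_measurable (measurable_itv _).
rewrite E_exp ?invr_ge0 // -EFinB lee_fin.
have := expR_ge1Dx (- 2^-1 : R); lra.
Qed.

Lemma prob_small_clocks lo L : ~~ odd lo ->
  (P (\bigcap_(k in `I_(lo + 2 * L)) (E k @^-1` small_clock lo k))
    <= ((2^-1) ^+ L)%:E)%E.
Proof.
move=> lo_even; rewrite E_indep; last exact: small_clock_measurable.
apply: (eprod_even_le_halfX (f := fun k => P (E k @^-1` small_clock lo k))) => //.
  move=> k; rewrite measure_ge0 probability_le1 //.
  exact: preimage_measurable (small_clock_measurable _ _).
move=> k k_even lo_k.
by rewrite /small_clock k_even lo_k; exact: prob_small_clock.
Qed.

Lemma prob_bad_level i : (P (bad_level E i) <= ((2^-1) ^+ i)%:E)%E.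
Proof.
apply: le_trans.
  apply: (@content_subadditive _ _ _ P _ (small_block E i) (2 ^ i)%N).
  - by move=> j _; exact: small_block_measurable.
  - exact: bad_level_measurable.
  - by [].
apply: (@le_trans _ _ (\sum_(j < 2 ^ i) ((2^-1 : R) ^+ block_evens i)%:E)%E).
  by apply: lee_sum => j _; exact: prob_small_clocks (block_start_even i j).
rewrite sumEFin lee_fin sumr_const card_ord /block_evens.
rewrite (_ : (2 * i + 2 = i + (i + 2))%N); last by lia.
rewrite -[_ *+ 2 ^ i]mulr_natl natrX exprD mulrA -exprMn mulfV // expr1n mul1r exprD.
by rewrite ler_piMr ?exprn_ge0 ?invr_ge0 // exprn_ile1 ?invr_ge0 ?invf_le1 ?ler1n.
Qed.

Lemma bad_level_limsup_null : P (lim_sup_set (bad_level E)) = 0%E.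
Proof.
apply: lim_sup_set_cvg0; first exact: bad_level_measurable.
apply: le_lt_trans (nneseries_halfX_lty R).
by apply: lee_nneseries => n _; [move=> _; exact: measure_ge0 | exact: prob_bad_level].
Qed.

End bad_levels.

Theorem lemma4 (R : realType) (N : nat) (sigma theta gamma : R)
    (d : measure_display) (T : measurableType d) (P : probability T R)
    (E : nat -> T -> R) :
  (0 < N)%N -> 0 < sigma -> 0 <= theta -> 0 <= gamma ->
  (forall k, measurable_fun setT (E k)) ->
  (forall k (a : R), 0 <= a -> P [set w | a < E k w] = (expR (- a))%:E) ->
  indep_seq P E ->
  {ae P, forall w, forall tau : nat -> R,
      contour_dyn N sigma theta gamma (fun k => E k w) tau ->
      S_time N tau x @[x --> +oo] --> +oo%E}.
Proof.
move=> N_gt0 sigma_gt0 _ gamma_ge0 mE E_exp E_indep.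
exists (lim_sup_set (bad_level E)); split.
- apply: bigcapT_measurable => n; apply: bigcup_measurable => k _.
  exact: bad_level_measurable.
- exact: bad_level_limsup_null.
move=> w /= w_bad; apply: contrapT => w_good; apply: w_bad => tau dyn.
have [n0 good_from] : exists n0, forall i, (n0 <= i)%N -> ~ bad_level E i w.
  apply: contrapT => often_bad; apply: w_good => n _; apply: contrapT => none_bad.
  by apply: often_bad; exists n => i ni bad_i; apply: none_bad; exists i.
have [_ tau_incr _ _] := dyn.
apply: (S_time_cvgy tau_incr N_gt0).
apply: (tau_unbounded N_gt0 sigma_gt0 gamma_ge0 dyn (n0 := n0)).
move=> i n0i j ji; apply: not_small_block => small; apply: (good_from i n0i).
by rewrite /bad_level -bigcup_mkord; exists j.
Qed.
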